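(* For $n\ge 2$ and $d\ge0$, the set of twisted $1$-forms $\omega\in H^0(\mathbb P^n,\Omega^1_{\mathbb P^n}(d+2))$ which admit a polynomial integrating factor is Zariski closed.
   Context: $H^0(\mathbb P^n,\Omega^1_{\mathbb P^n}(d+2))$ is identified with homogeneous polynomial $1$-forms $\sum_ia_idx_i$ on $\mathbb C^{n+1}$ with $a_i$ of degree $d+1$ and $\sum_ix_ia_i=0$ (no assumption on the codimension of the zero set). A polynomial integrating factor for $\omega$ is a non-zero $P\in H^0(\mathbb P^n,\mathcal O_{\mathbb P^n}(d+2))$ (homogeneous polynomial of degree $d+2$) such that $d(\omega/P)=0$. *)

From HB Require Import structures.
From mathcomp Require Import all_boot all_order all_algebra.
From mathcomp Require Import reals.
From mathcomp Require Import complex.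
From mathcomp Require Import mpoly.

Set Implicit Arguments.
Unset Strict Implicit.
Unset Printing Implicit Defensive.

Import Order.TTheory GRing.Theory Num.Theory.
Local Open Scope ring_scope.

(* A polynomial 1-form  omega = sum_i a_i dx_i  on C^(n+1), given by its
   coefficients a : 'I_(n+1) -> C[x_0,...,x_n]. *)

(* omega is an element of H^0(P^n, Omega^1(d+2)): every a_i is homogeneous
   of degree d+1 and  sum_i x_i a_i = 0. *)
Definition twisted_form (K : nzRingType) (n d : nat)
    (a : 'I_n.+1 -> {mpoly K[n.+1]}) : Prop :=
  (forall i, a i \is (d.+1).-homog) /\ \sum_(i < n.+1) 'X_i * a i = 0.

Definition dform_coef (K : nzRingType) (n : nat)
    (a : 'I_n.+1 -> {mpoly K[n.+1]}) (i j : 'I_n.+1) : {mpoly K[n.+1]} :=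
  mderiv i (a j) - mderiv j (a i).

Definition dP_wedge_coef (K : nzRingType) (n : nat) (P : {mpoly K[n.+1]})
    (a : 'I_n.+1 -> {mpoly K[n.+1]}) (i j : 'I_n.+1) : {mpoly K[n.+1]} :=
  mderiv i P * a j - mderiv j P * a i.

(* d(omega / P) = (P d(omega) - dP /\ omega) / P^2 ; so d(omega/P) = 0 iff
   P d(omega) = dP /\ omega, coefficientwise. *)
Definition closed_over (K : nzRingType) (n : nat) (P : {mpoly K[n.+1]})
    (a : 'I_n.+1 -> {mpoly K[n.+1]}) : Prop :=
  forall i j : 'I_n.+1, P * dform_coef a i j = dP_wedge_coef P a i j.

Definition has_poly_integrating_factor (K : nzRingType) (n d : nat)
    (a : 'I_n.+1 -> {mpoly K[n.+1]}) : Prop :=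
  exists P : {mpoly K[n.+1]},
    [/\ P != 0, P \is (d.+2).-homog & closed_over P a].

(* Linear coordinates on the space of forms: the coefficient of the
   monomial m (of degree < d+2, i.e. including all monomials of degree d+1)
   in a_i, for (i, m) in the finite index type coord_index n d. *)
Definition coord_index (n d : nat) : finType :=
  ('I_n.+1 * 'X_{1..n.+1 < d.+2})%type.

Definition form_coords (K : nzRingType) (n d : nat)
    (a : 'I_n.+1 -> {mpoly K[n.+1]}) : 'I_#|coord_index n d| -> K :=
  fun k => let ij := enum_val k in (a ij.1)@_(bmnm ij.2).

Definition zariski_closed_forms (K : nzRingType) (n d : nat)
    (S : ('I_n.+1 -> {mpoly K[n.+1]}) -> Prop) : Prop :=
  exists (I : Type) (F : I -> {mpoly K[#|coord_index n d|]}),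
    forall a, @twisted_form K n d a ->
      (S a <-> forall k : I, (F k).@[@form_coords K n d a] = 0).

(* The condition d(omega/P) = 0, i.e. P d(omega) = dP /\ omega, is linear in P,
   and its coefficients are linear in the coefficients of omega.  So omega has
   an integrating factor iff a matrix G(omega), whose entries are polynomials
   in the coordinates of omega, has a non-zero kernel vector in the space of
   homogeneous polynomials of degree d+2, i.e. iff all maximal minors of
   G(omega) vanish.  The argument works over any field, for every n, and
   uses only the homogeneity of the coefficients of omega. *)

From HB Require Import structures.
From mathcomp Require Import all_boot all_order all_algebra.
From mathcomp Require Import reals complex mpoly ring.

Set Implicit Arguments.
Unset Strict Implicit.
Unset Printing Implicit Defensive.

Import Order.TTheory GRing.Theory Num.Theory.
Local Open Scope ring_scope.

Section KernelMinors.
Variables (F : fieldType) (m N : nat).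
Implicit Type M : 'M[F]_(m, N).

Lemma col_kernel_neq0P M :
  (exists2 v : 'cV_N, v != 0 & M *m v = 0) <-> ~~ row_full M.
Proof.
have -> : row_full M = row_free M^T by rewrite /row_free mxrank_tr.
rewrite -kermx_eq0; split.
- move=> [v v_neq0 Mv0]; apply/rowV0Pn; exists v^T; last by rewrite trmx_eq0.
  by apply/sub_kermxP; rewrite -trmx_mul Mv0 trmx0.
- case/rowV0Pn => u /sub_kermxP uM0 u_neq0.
  exists u^T; first by rewrite trmx_eq0.
  by apply: trmx_inj; rewrite trmx_mul trmxK uM0 trmx0.
Qed.

Lemma row_full_minorP M :
  row_full M <-> exists f : 'I_N -> 'I_m, \det (rowsub f M) != 0.
Proof.
split=> [fullM | [f det_neq0]].
  have := maxrowsub_free M; move: (maxrankfun M); rewrite (eqP fullM) => f.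
  by rewrite row_free_unit unitmxE unitfE => det_neq0; exists f.
have rk_sub : \rank (rowsub f M) = N.
  by apply: mxrank_unit; rewrite unitmxE unitfE.
by rewrite /row_full eqn_leq rank_leq_col -{1}rk_sub mxrankS ?rowsub_sub.
Qed.

Lemma col_kernel_neq0_minorsP M :
  (exists2 v : 'cV_N, v != 0 & M *m v = 0) <->
  (forall f : 'I_N -> 'I_m, \det (rowsub f M) = 0).
Proof.
apply: (iff_trans (col_kernel_neq0P M)); split=> [not_full f | minors0].
  apply/eqP; apply: contraNT not_full => det_neq0.
  by apply/row_full_minorP; exists f.
by apply/negP => /row_full_minorP [f]; rewrite minors0 eqxx.
Qed.

End KernelMinors.

Lemma msize_dhomog (K : nzRingType) n e (p : {mpoly K[n]}) :
  p \is e.-homog -> (msize p <= e.+1)%N.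
Proof.
move=> p_homog; rewrite msizeE; apply/bigmax_leqP_seq => m m_supp _.
by rewrite (dhomog_mf p_homog m_supp).
Qed.

Section HomogCoords.
Variables (K : nzRingType) (n e : nat).

Definition homog_monom : pred 'X_{1..n < e.+1} := fun m => mdeg m == e.

Definition homog_monom_of (k : 'I_#|homog_monom|) : 'X_{1..n} := enum_val k.

Definition homog_poly (v : 'cV[K]_#|homog_monom|) : {mpoly K[n]} :=
  \sum_k v k 0 *: 'X_[homog_monom_of k].

Definition homog_coords (P : {mpoly K[n]}) : 'cV[K]_#|homog_monom| :=
  \col_k P@_(homog_monom_of k).

Lemma homog_monom_of_inj : injective homog_monom_of.
Proof. by move=> k l /val_inj /enum_val_inj. Qed.

Lemma mcoeff_homog_poly v k : (homog_poly v)@_(homog_monom_of k) = v k 0.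
Proof.
rewrite /homog_poly raddf_sum (bigD1 k) //= big1 => [|l l_neq_k].
  by rewrite mcoeffZ mcoeffX eqxx mulr1 addr0.
by rewrite mcoeffZ mcoeffX (inj_eq homog_monom_of_inj) (negPf l_neq_k) mulr0.
Qed.

Lemma homog_poly_dhomog v : homog_poly v \is e.-homog.
Proof.
apply: rpred_sum => k _; apply: rpredZ; rewrite dhomogX.
exact: (enum_valP k).
Qed.

Lemma homog_coordsK P : P \is e.-homog -> homog_poly (homog_coords P) = P.
Proof.
move=> P_homog; rewrite [RHS](mpolywE (msize_dhomog P_homog)).
rewrite (bigID homog_monom) /= [X in _ = _ + X]big1 ?addr0 => [|m m_deg].
  rewrite (big_enum_val (A := homog_monom)).
  by apply: eq_bigr => k _; rewrite mxE.
by rewrite (dhomog_nemf_coeff P_homog m_deg) scale0r.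
Qed.

Lemma homog_poly_eq0 v : (homog_poly v == 0) = (v == 0).
Proof.
apply/eqP/eqP => [v_homog0 | ->].
  apply/matrixP => k z.
  by rewrite (ord1 z) -mcoeff_homog_poly v_homog0 mcoeff0 mxE.
by rewrite /homog_poly big1 // => k _; rewrite mxE scale0r.
Qed.

End HomogCoords.

Arguments homog_monom : clear implicits.

Lemma msize_mderiv (K : nzRingType) n i (p : {mpoly K[n]}) :
  (msize p^`M(i) <= msize p)%N.
Proof.
rewrite [X in (X <= _)%N]msizeE; apply/bigmax_leqP_seq => m.
rewrite mcoeff_msupp mcoeff_mderiv => m_supp _.
have mU_supp : (m + U_(i))%MM \in msupp p.
  by rewrite mcoeff_msupp; apply: contraNneq m_supp => ->; rewrite mul0rn.
by have := msize_mdeg_lt mU_supp; rewrite mdegD mdeg1 addn1 => /ltnW.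
Qed.

Lemma map_mderiv (K S : nzRingType) (f : {rmorphism K -> S}) n i
    (p : {mpoly K[n]}) :
  map_mpoly f p^`M(i) = (map_mpoly f p)^`M(i).
Proof.
apply/mpolyP => m.
by rewrite mcoeff_map_mpoly !mcoeff_mderiv mcoeff_map_mpoly raddfMn.
Qed.

Section ClosednessDefect.
Variables (K : comNzRingType) (n : nat) (a : 'I_n.+1 -> {mpoly K[n.+1]}).

Definition closedness_defect (i j : 'I_n.+1) (P : {mpoly K[n.+1]}) :=
  P * dform_coef a i j - dP_wedge_coef P a i j.

Lemma closed_overE P :
  closed_over P a <-> forall i j, closedness_defect i j P = 0.
Proof.
split=> P_closed i j; first by rewrite /closedness_defect P_closed subrr.
by apply/eqP; rewrite -subr_eq0; apply/eqP/P_closed.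
Qed.

Lemma closedness_defect_is_linear i j : linear (closedness_defect i j).
Proof.
move=> c P Q; rewrite /closedness_defect /dP_wedge_coef !mderivD !mderivZ.
by rewrite !mulrDl -!scalerAl scalerBr; ring.
Qed.

HB.instance Definition _ i j :=
  GRing.isLinear.Build K {mpoly K[n.+1]} {mpoly K[n.+1]} _
    (closedness_defect i j) (closedness_defect_is_linear i j).

Lemma msize_closedness_defect p q i j P :
    (msize P <= p)%N -> (forall k, msize (a k) <= q)%N ->
  (msize (closedness_defect i j P) <= (p + q).+1)%N.
Proof.
move=> P_size a_size.
have size_mul (u v : {mpoly K[n.+1]}) :
    (msize u <= p)%N -> (msize v <= q)%N -> (msize (u * v) <= (p + q).+1)%N.
  by move=> u_size v_size; rewrite (leq_trans (msizeM_le _ _)) ?ltnS ?leq_add.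
have size_sub (u v : {mpoly K[n.+1]}) :
    (msize u <= (p + q).+1)%N -> (msize v <= (p + q).+1)%N ->
  (msize (u - v) <= (p + q).+1)%N.
  move=> u_size v_size; rewrite (leq_trans (msizeD_le _ _)) //.
  by rewrite geq_max msizeN u_size.
have da_size k l : (msize (a l)^`M(k) <= q)%N.
  exact: leq_trans (msize_mderiv _ _) (a_size l).
have dP_size k : (msize P^`M(k) <= p)%N.
  exact: leq_trans (msize_mderiv _ _) P_size.
rewrite /closedness_defect /dform_coef /dP_wedge_coef mulrBr.
by rewrite !size_sub ?size_mul.
Qed.

End ClosednessDefect.

Lemma map_closedness_defect (K S : comNzRingType) (f : {rmorphism K -> S}) n
    (a : 'I_n.+1 -> {mpoly K[n.+1]}) (b : 'I_n.+1 -> {mpoly S[n.+1]}) i j P :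
    (forall k, map_mpoly f (a k) = b k) ->
  map_mpoly f (closedness_defect a i j P) =
  closedness_defect b i j (map_mpoly f P).
Proof.
move=> ab; rewrite /closedness_defect /dform_coef /dP_wedge_coef.
by rewrite !(rmorphB, rmorphM) /= !map_mderiv !ab.
Qed.

(* The bound is that of msize_closedness_defect for msize P <= d+3 and
   msize (a k) <= d+2. *)
Definition defect_index (n d : nat) : finType :=
  ('I_n.+1 * 'I_n.+1 * 'X_{1..n.+1 < (d.+3 + d.+2).+1})%type.

Definition defect_coef (S : comNzRingType) n d (a : 'I_n.+1 -> {mpoly S[n.+1]})
    (r : defect_index n d) (P : {mpoly S[n.+1]}) : S :=
  (closedness_defect a r.1.1 r.1.2 P)@_r.2.

Section GenericForm.
Variables (K : comNzRingType) (n d : nat).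

Local Notation coord_ring := {mpoly K[#|coord_index n d|]}.

Definition generic_form (j : 'I_n.+1) : {mpoly coord_ring[n.+1]} :=
  \sum_(m : 'X_{1..n.+1 < d.+2})
    'X_(enum_rank ((j, m) : coord_index n d)) *: 'X_[m].

Definition defect_matrix :
    'M[coord_ring]_(#|defect_index n d|, #|homog_monom n.+1 d.+2|) :=
  \matrix_(r, k) defect_coef generic_form (enum_val r) 'X_[homog_monom_of k].

Lemma eval_generic_form (a : 'I_n.+1 -> {mpoly K[n.+1]}) j :
    (msize (a j) <= d.+2)%N ->
  map_mpoly (meval (form_coords a)) (generic_form j) = a j.
Proof.
move=> a_size; rewrite [RHS](mpolywE a_size) raddf_sum /=.
apply: eq_bigr => m _.
by rewrite map_mpolyZ map_mpolyX /= mevalXU /form_coords enum_rankK.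
Qed.

Lemma eval_defect_matrix (a : 'I_n.+1 -> {mpoly K[n.+1]}) v :
    (forall k, msize (a k) <= d.+2)%N ->
  map_mx (meval (form_coords a)) defect_matrix *m v =
  \col_r defect_coef a (enum_val r) (homog_poly v).
Proof.
move=> a_size; have eval_a l := eval_generic_form (a_size l).
apply/matrixP => r z; rewrite (ord1 z) !mxE /defect_coef.
rewrite linear_sum raddf_sum; apply: eq_bigr => k _.
rewrite !mxE linearZ /= mcoeffZ mulrC /defect_coef -mcoeff_map_mpoly.
by rewrite (map_closedness_defect _ _ _ eval_a) map_mpolyX.
Qed.

Lemma closed_over_defect_coefP (a : 'I_n.+1 -> {mpoly K[n.+1]}) P :
    (forall k, msize (a k) <= d.+2)%N -> P \is d.+2.-homog ->
  closed_over P a <-> forall r : defect_index n d, defect_coef a r P = 0.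
Proof.
move=> a_size P_homog; apply: (iff_trans (closed_overE a P)).
split=> [P_closed r | coefs0 i j].
  by rewrite /defect_coef P_closed mcoeff0.
have /mpolywE -> := msize_closedness_defect i j (msize_dhomog P_homog) a_size.
apply: big1 => m _; have := coefs0 (i, j, m).
by rewrite /defect_coef => ->; rewrite scale0r.
Qed.

Lemma integrating_factor_kernelP (a : 'I_n.+1 -> {mpoly K[n.+1]}) :
    (forall k, a k \is d.+1.-homog) ->
  has_poly_integrating_factor d a <->
  exists2 v : 'cV_#|homog_monom n.+1 d.+2|,
    v != 0 & map_mx (meval (form_coords a)) defect_matrix *m v = 0.
Proof.
move=> a_homog; have a_size k := msize_dhomog (a_homog k).
split=> [[P [P_neq0 P_homog P_closed]] | [v v_neq0 v_ker]].
  exists (homog_coords d.+2 P); first by rewrite -homog_poly_eq0 homog_coordsK.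
  rewrite eval_defect_matrix // homog_coordsK //; apply/matrixP => r z.
  by rewrite !mxE; apply: (closed_over_defect_coefP a_size P_homog).1.
exists (homog_poly v); split; first by rewrite homog_poly_eq0.
  exact: homog_poly_dhomog.
apply/(closed_over_defect_coefP a_size (homog_poly_dhomog v)).2 => r.
have /matrixP/(_ (enum_rank r) 0) := v_ker.
by rewrite eval_defect_matrix // !mxE enum_rankK.
Qed.

End GenericForm.

Lemma zariski_closed_integrating_factor (K : fieldType) n d :
  @zariski_closed_forms K n d (@has_poly_integrating_factor K n d).
Proof.
exists ('I_#|homog_monom n.+1 d.+2| -> 'I_#|defect_index n d|).
exists (fun f => \det (rowsub f (defect_matrix K n d))) => a [a_homog _].
apply: (iff_trans (integrating_factor_kernelP a_homog)).
apply: (iff_trans (col_kernel_neq0_minorsP _)).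
have eval_minor f :
    \det (rowsub f (map_mx (meval (form_coords a)) (defect_matrix K n d))) =
    (\det (rowsub f (defect_matrix K n d))).@[form_coords a].
  by rewrite -map_mxsub det_map_mx.
by split=> minors0 f; have := minors0 f; rewrite eval_minor.
Qed.

Theorem lemma3p6 (R : realType) (n d : nat) :
  (2 <= n)%N ->
  @zariski_closed_forms R[i] n d (@has_poly_integrating_factor R[i] n d).
Proof. by move=> _; exact: zariski_closed_integrating_factor. Qed.
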